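(* Let $T$ be a lifted graph, $F\colon T\to T$ a continuous sun-like map of degree 1, ${\cal P}$ a basic partition of $F$ and ${\cal G}$ its covering graph. Let $\alpha=A_0\dots A_n/\!\sim$ be a vertex of ${\cal G}$ (with $A_0,\dots,A_n\in{\cal P}$) and let $\alpha\to\beta$ be an arrow in ${\cal G}$. Then there exists $A_{n+1}\in{\cal P}$ such that $\beta=A_0\dots A_nA_{n+1}/\!\sim$.
   Context: A lifted graph is a connected topological space $T$ with a homeomorphism $h\colon\mathbb R\to h(\mathbb R)\subset T$ and a homeomorphism $\tau\colon T\to T$ such that $\tau(h(x))=h(x+1)$, the closure of each connected component of $T\setminus h(\mathbb R)$ is a topological finite graph meeting $h(\mathbb R)$ in exactly one point, and only finitely many such components have closure meeting $h([0,1])$. Identify $h(\mathbb R)$ with $\mathbb R$, write $x+m:=\tau^m(x)$; $r_{\mathbb R}\colon T\to\mathbb R$ is the identity on $\mathbb R$ and maps a component $C$ of $T\setminus\mathbb R$ to the point $\overline C\cap\mathbb R$. $F$ has degree 1 if $F(x+1)=F(x)+1$. Let $T_{\mathbb R}:=\overline{\bigcup_{n\ge0}F^n(\mathbb R)}$, $X:=\overline{T\setminus T_{\mathbb R}}\cap r_{\mathbb R}^{-1}([0,1))$. $F$ is sun-like if $(T\setminus T_{\mathbb R})\cap r_{\mathbb R}^{-1}([0,1))$ consists of finitely many intervals with pairwise disjoint closures $X^i$, $i\in\Lambda$ (branches), each a compact interval meeting $T_{\mathbb R}$ in one endpoint $\min X^i$ (fixing the order of $X^i$). A basic partition is a finite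 family ${\cal P}=\{X^i_j\}$ of pairwise disjoint nonempty compact intervals $X^i_1<\dots<X^i_{N_i}$ in $X^i$, with $\ell(X^i_j)\in\Lambda$, $p(X^i_j)\in\mathbb Z$, such that $F(X^i_j)\subset(X^{\ell(X^i_j)}+p(X^i_j))\cup\mathrm{Int}(T_{\mathbb R})$, $F(\min X^i_j)=\min X^{\ell(X^i_j)}+p(X^i_j)$, and $F(X\setminus\bigcup X^i_j)\cap(X+\mathbb Z)=\emptyset$. For $A_0,\dots,A_n\in{\cal P}$, $\langle A_0\dots A_n\rangle:=F^n(\{x\in T: F^i(x)\in A_i+\mathbb Z,\ 0\le i\le n\})\cap X$. $A_0\dots A_n\sim B_0\dots B_m$ iff for some $k\le\min(n,m)$, $A_{n-i}=B_{m-i}$ ($0\le i\le k$) and $\langle A_0\dots A_{n-k}\rangle=A_{n-k}=B_{m-k}=\langle B_0\dots B_{m-k}\rangle$ (an equivalence relation). The covering graph ${\cal G}$: vertices are classes $A_0\dots A_n/\!\sim$ with $\langle A_0\dots A_n\rangle\ne\emptyset$; an arrow $\alpha\to\beta$ exists iff $\alpha=B_0\dots B_m/\!\sim$ and $\beta=B_0\dots B_mB_{m+1}/\!\sim$ for some $B_0,\dots,B_{m+1}\in{\cal P}$. *)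

From HB Require Import structures.
From mathcomp Require Import all_boot all_order all_algebra.
From mathcomp Require Import all_classical all_reals all_analysis.
From mathcomp Require Import Rstruct Rstruct_topology.
Set Implicit Arguments. Unset Strict Implicit. Unset Printing Implicit Defensive.
Import Order.TTheory GRing.Theory Num.Theory.
Local Open Scope classical_set_scope.
Local Open Scope ring_scope.

Notation RR := Rdefinitions.R.

Section LiftedGraphs.
Variable T : topologicalType.

Definition embedding (f : RR -> T) :=
  [/\ continuous f, injective f &
      forall U : set RR, open U -> exists V : set T, open V /\ f @` U = V `&` range f].

Definition arc_map (e : RR -> T) :=
  [/\ {within `[0, 1]%classic, continuous e}, set_inj `[0, 1]%classic e &
      forall U : set RR, open U -> exists V : set T,
         open V /\ e @` (U `&` `[0, 1]%classic) = V `&` e @` `[0, 1]%classic].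

Definition finite_graph (G : set T) :=
  exists (m : nat) (pt : nat -> T) (k : nat) (e : nat -> RR -> T),
    [/\ forall i, (i < k)%N -> arc_map (e i),
        G = pt @` `I_m `|` \bigcup_(i in `I_k) (e i @` `[0, 1]%classic) &
        forall i j, (i < k)%N -> (j < k)%N -> i <> j ->
          forall s t : RR, `[0, 1]%classic s -> `[0, 1]%classic t -> e i s = e j t ->
            (s = 0 \/ s = 1) /\ (t = 0 \/ t = 1)].

(* x + m := tau^m x  for m : int, taui being the inverse of tau *)
Definition shift (tau taui : T -> T) (m : int) (x : T) : T :=
  match m with Posz n => iter n tau x | Negz n => iter n.+1 taui x end.

Definition comp (h : RR -> T) (x : T) := connected_component (~` range h) x.

Definition lifted_graph (h : RR -> T) (tau taui : T -> T) :=
  [/\ connected [set: T] /\ embedding h,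
      [/\ continuous tau, continuous taui, cancel tau taui & cancel taui tau],
      (forall x : RR, tau (h x) = h (x + 1)),
      (forall x, ~ range h x ->
          finite_graph (closure (comp h x)) /\
          exists t : RR, closure (comp h x) `&` range h = [set h t]) &
      finite_set [set C : set T | exists x, [/\ ~ range h x, C = comp h x &
                         closure C `&` (h @` `[0, 1]%classic) !=set0]]].

(* r_R^{-1}(I) for I a subset of R *)
Definition rpre (h : RR -> T) (I : set RR) : set T :=
  [set x | (exists t, I t /\ h t = x) \/
           (~ range h x /\ exists t, I t /\ closure (comp h x) (h t))].

Definition degree_one (tau F : T -> T) := forall x, F (tau x) = tau (F x).

Definition TR (h : RR -> T) (F : T -> T) : set T :=
  closure (\bigcup_(n in [set: nat]) (iter n F @` range h)).

Definition Xset (h : RR -> T) (F : T -> T) : set T :=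
  closure (~` TR h F) `&` rpre h `[0, 1[%classic.

(* F is sun-like, the branches being X^i = phi i @` [0,1] for i < N,
   with min X^i = phi i 0 (this fixes the order on X^i). *)
Definition sun_like (h : RR -> T) (F : T -> T) (N : nat) (phi : nat -> RR -> T) :=
  [/\ forall i, (i < N)%N -> arc_map (phi i),
      (~` TR h F) `&` rpre h `[0, 1[%classic = \bigcup_(i in `I_N) (phi i @` `]0, 1]%classic),
      (forall i j, (i < N)%N -> (j < N)%N -> i <> j ->
         phi i @` `[0, 1]%classic `&` phi j @` `[0, 1]%classic = set0) &
      (forall i, (i < N)%N -> phi i @` `[0, 1]%classic `&` TR h F = [set phi i 0])].

(* basic partition: for i < N the intervals X^i_j = phi i @` [a i j, b i j],
   j < Ni i, in increasing order; ell i j and p i j as in the paper *)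
Definition Pset (phi : nat -> RR -> T) (a b : nat -> nat -> RR) (A : nat * nat) : set T :=
  phi A.1 @` `[a A.1 A.2, b A.1 A.2]%classic.

Definition inP (N : nat) (Ni : nat -> nat) (A : nat * nat) := (A.1 < N)%N && (A.2 < Ni A.1)%N.

Definition basic_partition (h : RR -> T) (tau taui F : T -> T) (N : nat)
    (phi : nat -> RR -> T) (Ni : nat -> nat) (a b : nat -> nat -> RR)
    (ell : nat -> nat -> nat) (p : nat -> nat -> int) :=
  [/\ (forall i j, (i < N)%N -> (j < Ni i)%N -> [/\ 0 <= a i j, a i j <= b i j & b i j <= 1]) /\
      (forall i j, (i < N)%N -> (j.+1 < Ni i)%N -> b i j < a i j.+1),
      (forall i j, (i < N)%N -> (j < Ni i)%N -> (ell i j < N)%N),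
      (forall i j, (i < N)%N -> (j < Ni i)%N ->
         F @` Pset phi a b (i, j) `<=`
           (shift tau taui (p i j) @` (phi (ell i j) @` `[0, 1]%classic)) `|` interior (TR h F)),
      (forall i j, (i < N)%N -> (j < Ni i)%N ->
         F (phi i (a i j)) = shift tau taui (p i j) (phi (ell i j) 0)) &
      (F @` (Xset h F `\` \bigcup_(A in [set A | inP N Ni A]) Pset phi a b A)
        `&` [set shift tau taui m x | m in [set: int] & x in Xset h F] = set0)].

Definition PZ (tau taui : T -> T) (phi : nat -> RR -> T) (a b : nat -> nat -> RR)
    (A : nat * nat) : set T :=
  [set shift tau taui m x | m in [set: int] & x in Pset phi a b A].

Definition cyl (h : RR -> T) (tau taui F : T -> T) (phi : nat -> RR -> T)
    (a b : nat -> nat -> RR) (w : seq (nat * nat)) : set T :=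
  (iter (size w).-1 F @`
     [set x | forall i, (i < size w)%N -> PZ tau taui phi a b (nth (0,0)%N w i) (iter i F x)])
  `&` Xset h F.

Definition sim (h : RR -> T) (tau taui F : T -> T) (phi : nat -> RR -> T)
    (a b : nat -> nat -> RR) (w v : seq (nat * nat)) : Prop :=
  let n := (size w).-1 in let m := (size v).-1 in
  exists k, [/\ (k <= minn n m)%N,
    (forall i, (i <= k)%N -> nth (0,0)%N w (n - i) = nth (0,0)%N v (m - i)),
    cyl h tau taui F phi a b (take (n - k).+1 w) = Pset phi a b (nth (0,0)%N w (n - k)),
    Pset phi a b (nth (0,0)%N w (n - k)) = Pset phi a b (nth (0,0)%N v (m - k)) &
    Pset phi a b (nth (0,0)%N v (m - k)) = cyl h tau taui F phi a b (take (m - k).+1 v)].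

Definition word (N : nat) (Ni : nat -> nat) (w : seq (nat * nat)) :=
  w <> [::] /\ all (inP N Ni) w.

Definition cls (N : nat) (Ni : nat -> nat) (h : RR -> T) (tau taui F : T -> T)
    (phi : nat -> RR -> T) (a b : nat -> nat -> RR) (w : seq (nat * nat)) :
    set (seq (nat * nat)) :=
  [set v | word N Ni v /\ sim h tau taui F phi a b w v].

Definition vertex N Ni h tau taui F phi a b (al : set (seq (nat * nat))) :=
  exists w, [/\ word N Ni w, cyl h tau taui F phi a b w !=set0 &
                al = cls N Ni h tau taui F phi a b w].

Definition arrow N Ni h tau taui F phi a b (al be : set (seq (nat * nat))) :=
  [/\ vertex N Ni h tau taui F phi a b al, vertex N Ni h tau taui F phi a b be &
      exists w B, [/\ word N Ni w, inP N Ni B,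
        al = cls N Ni h tau taui F phi a b w &
        be = cls N Ni h tau taui F phi a b (rcons w B)]].

End LiftedGraphs.

From Pilot Require Import Defs.
From HB Require Import structures.
From mathcomp Require Import all_boot all_order all_algebra.
From mathcomp Require Import all_classical all_reals all_analysis.
From mathcomp Require Import Rstruct Rstruct_topology.
From mathcomp Require Import zify lra.
Set Implicit Arguments. Unset Strict Implicit. Unset Printing Implicit Defensive.
Import Order.TTheory GRing.Theory Num.Theory.
Local Open Scope classical_set_scope.
Local Open Scope ring_scope.

(* Every letter A of the partition lies in the fundamental domain X, which
   meets none of its nontrivial integer translates; hence <A> = A.  Because F
   commutes with the translations, the cylinder of a word extended by a letter
   B depends only on the cylinder of the word (apply F, keep the points lying
   over B + Z, translate back into X), so equal cylinders stay equal when
   common letters are appended.  If the arrow comes from a representative w'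
   of the class of w, then w = y c s and w' = x c s with <x c> = c = <y c>.
   Appending B keeps this pivot c, and any word similar to w'B can be
   re-pivoted to be similar to wB, and conversely. *)

Section Shift.
Variables (T : topologicalType) (tau taui : T -> T).
Local Notation sh := (Defs.shift tau taui).

Lemma shiftS1 : cancel taui tau -> forall m x, sh (m + 1) x = tau (sh m x).
Proof.
move=> tauiK [k|[|k]] x.
- by have -> : Posz k + 1 = Posz k.+1 by lia.
- by rewrite (_ : Negz 0 + 1 = 0) /= ?tauiK //; lia.
- by rewrite (_ : Negz k.+1 + 1 = Negz k) /= ?tauiK //; lia.
Qed.

Lemma shiftN1 : cancel tau taui -> forall m x, sh (m - 1) x = taui (sh m x).
Proof.
move=> tauK [[|k]|k] x.
- by have -> : Posz 0 - 1 = Negz 0 by lia.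
- by rewrite (_ : Posz k.+1 - 1 = Posz k) /= ?tauK //; lia.
- by have -> : Negz k - 1 = Negz k.+1 by lia.
Qed.

Hypotheses (tauK : cancel tau taui) (tauiK : cancel taui tau).

Lemma shiftD m n x : sh m (sh n x) = sh (m + n) x.
Proof.
case: m => k.
- elim: k => [|k IH]; first by rewrite add0r.
  have -> : Posz k.+1 + n = (Posz k + n) + 1 by lia.
  by rewrite shiftS1 // -IH.
- elim: k => [|k IH].
    by rewrite (_ : Negz 0 + n = n - 1) ?shiftN1 //; lia.
  have -> : Negz k.+1 + n = (Negz k + n) - 1 by lia.
  by rewrite shiftN1 // -IH.
Qed.

Lemma shiftNK m x : sh (- m) (sh m x) = x.
Proof. by rewrite shiftD addNr. Qed.

Lemma shiftKN m x : sh m (sh (- m) x) = x.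
Proof. by rewrite shiftD addrN. Qed.

Lemma shift_continuous m : continuous tau -> continuous taui -> continuous (sh m).
Proof.
have iter_cont n (f : T -> T) : continuous f -> continuous (iter n f).
  move=> cf; elim: n => [|n IH] x /=; first exact: cvg_id.
  exact: continuous_comp (IH x) (cf _).
by move=> ctau ctaui; case: m => k; apply: iter_cont.
Qed.

Lemma shift_commute (F : T -> T) : degree_one tau F -> forall m x, F (sh m x) = sh m (F x).
Proof.
move=> dF.
have dFi x : F (taui x) = taui (F x) by rewrite -{2}(tauiK x) dF tauK.
move=> [k|k] x /=.
- by elim: k => [|k IH] //=; rewrite dF IH.
- by elim: k => [|k IH] //=; rewrite dFi IH.
Qed.

Lemma iter_shift (F : T -> T) : degree_one tau F ->
  forall n m x, iter n F (sh m x) = sh m (iter n F x).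
Proof. by move=> dF; elim=> [|n IH] m x //=; rewrite IH shift_commute. Qed.

Lemma PZ_shift phi a b A m x : PZ tau taui phi a b A x -> PZ tau taui phi a b A (sh m x).
Proof. by move=> [k _ [y Py <-]]; exists (m + k) => //; exists y; rewrite ?shiftD. Qed.

Lemma shift_line (h : RR -> T) : (forall t, tau (h t) = h (t + 1)) ->
  forall m t, sh m (h t) = h (t + m%:~R).
Proof.
move=> th.
have thi t : taui (h t) = h (t - 1) by rewrite -{1}(subrK 1 t) -th tauK.
move=> [k|k] t /=.
- elim: k => [|k IH] /=; first by rewrite addr0.
  rewrite IH th -addrA -!pmulrn mulrS; congr (h (_ + _)).
  exact: addrC.
- rewrite NegzE mulrNz; elim: k => [|k IH] /=; first by rewrite thi.
  rewrite IH thi -!pmulrn mulrS; congr h; lra.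
Qed.

End Shift.

Lemma closure_image_continuous (T U : topologicalType) (g : T -> U) (S : set T) y :
  continuous g -> closure S y -> closure (g @` S) (g y).
Proof.
move=> cg Sy B /cg /Sy [z [Sz Bz]].
by exists (g z); split => //; exists z.
Qed.

Lemma closure_image_continuous_within (T U : topologicalType) (e : T -> U) (A S : set T) s :
  {within A, continuous e} -> A s -> S `<=` A -> closure S s -> closure (e @` S) (e s).
Proof.
move=> ce As SA Ss B /((subspace_continuousP _ _).1 ce s As) /Ss [r [Sr /(_ (SA _ Sr)) Br]].
by exists (e r); split => //; exists r.
Qed.

Lemma closure_itvoc01 : closure (`]0, 1]%classic : set RR) 0.
Proof.
move=> U /nbhs_ballP [e e0 He].
set r := Num.min (e / 2) 1.
have r0 : 0 < r by rewrite lt_min ltr01 andbT divr_gt0.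
have re : r <= e / 2 by rewrite ge_min lexx.
exists r; split; first by rewrite /= in_itv /= r0 ge_min lexx orbT.
apply: He; rewrite /ball /= sub0r normrN ger0_norm ?ltW //; lra.
Qed.

Lemma shift_int_itv01 (m : int) (t : RR) :
  t \in `[0, 1[ -> t + m%:~R \in `[0, 1[ -> m = 0.
Proof.
rewrite !in_itv /= => /andP[t0 t1] /andP[tm0 tm1].
have : (m%:~R : RR) < 1 by lra.
have : ((- m)%:~R : RR) < 1 by rewrite mulrNz; lra.
rewrite !ltrz1; lia.
Qed.

Section Components.
Variables (T : topologicalType) (h : RR -> T).

Lemma comp_image (g : T -> T) z y :
  continuous g -> (forall u, ~ range h u -> ~ range h (g u)) ->
  Defs.comp h z y -> Defs.comp h (g z) (g y).
Proof.
move=> cg hg [C [Cz CA cC] Cy].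
have : g @` C `<=` Defs.comp h (g z).
  apply: connected_component_max.
  - by exists z.
  - by move=> _ [u Cu <-]; apply/hg/CA.
  - by apply: connected_continuous_connected => //; exact: continuous_subspaceT.
by apply; exists y.
Qed.

Lemma range_TR (F : T -> T) : range h `<=` TR h F.
Proof. by move=> _ [t _ <-]; apply: subset_closure; exists 0%N => //; exists (h t). Qed.

Variables (tau taui : T -> T).
Hypothesis LG : lifted_graph h tau taui.
Local Notation sh := (Defs.shift tau taui).

Lemma rpre_uniq (I J : set RR) z : rpre h I z -> rpre h J z -> exists2 t, I t & J t.
Proof.
have [[_ [_ hinj _]] _ _ Hcomp _] := LG.
case=> [[t [It <-]]|[nz [t [It ct]]]].
  case=> [[t' [Jt' /hinj et]]|[nr _]]; first by rewrite et in Jt'; exists t.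
  by exfalso; apply: nr; exists t.
case=> [[t' [_ ht']]|[_ [t' [Jt' ct']]]].
  by exfalso; apply: nz; exists t'.
have [_ [t1 E]] := Hcomp z nz.
have foot u : closure (Defs.comp h z) (h u) -> u = t1.
  move=> cu; apply: hinj.
  have : (closure (Defs.comp h z) `&` range h) (h u) by split => //; exists u.
  by rewrite E.
by exists t => //; rewrite (foot _ ct) -(foot _ ct').
Qed.

Lemma rpre_shift (I : set RR) m z :
  rpre h I z -> rpre h [set t + m%:~R | t in I] (sh m z).
Proof.
have [[_ [_ hinj _]] [ctau ctaui tauK tauiK] th _ _] := LG.
have shh := shift_line tauK th.
have keep_off u : ~ range h u -> ~ range h (sh m u).
  by move=> nu [t _ ht]; apply: nu; exists (t + (- m)%:~R) => //; rewrite -shh ht shiftNK.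
case=> [[t [It <-]]|[nz [t [It ct]]]].
  by left; exists (t + m%:~R); split; [exists t | rewrite shh].
right; split; first exact: keep_off.
exists (t + m%:~R); split; first by exists t.
have csh : continuous (sh m) by exact: shift_continuous.
rewrite -shh; have := closure_image_continuous csh ct; apply: closureS.
by move=> _ [y cy <-]; exact: comp_image.
Qed.

Lemma rpre_shift_eq0 m z :
  rpre h `[0, 1[%classic z -> rpre h `[0, 1[%classic (sh m z) -> m = 0.
Proof.
move=> /(rpre_shift m) z01 /(rpre_uniq z01) [_ [t t01 <-]].
exact: shift_int_itv01.
Qed.

End Components.

Section Branches.
Variables (T : topologicalType) (h : RR -> T) (tau taui F : T -> T).
Variables (N : nat) (phi : nat -> RR -> T).
Hypotheses (LG : lifted_graph h tau taui) (SL : sun_like h F N phi).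

Lemma branch_off_TR i s : (i < N)%N -> 0 < s -> s <= 1 ->
  (~` TR h F `&` rpre h `[0, 1[%classic) (phi i s).
Proof.
have [_ -> _ _] := SL.
by move=> iN s0 s1; exists i => //; exists s => //; rewrite /= in_itv /= s0 s1.
Qed.

Lemma branch_in_X i s : (i < N)%N -> 0 <= s -> s <= 1 -> Xset h F (phi i s).
Proof.
move=> iN; have [parc _ _ _] := SL; have [carc _ _] := parc i iN.
have off_range r : 0 < r -> r <= 1 -> ~ range h (phi i r).
  by move=> r0 r1 /(range_TR F); case: (branch_off_TR iN r0 r1).
rewrite le_eqVlt => /orP[/eqP <- _|s0 s1]; last first.
  by case: (branch_off_TR iN s0 s1) => nT rs; split => //; exact: subset_closure.
have [_ r1] := branch_off_TR iN ltr01 (lexx 1).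
have open_comp : phi i @` `]0, 1] `<=` Defs.comp h (phi i 1).
  apply: connected_component_max.
  - by exists 1 => //; rewrite /= in_itv /= ltr01 lexx.
  - by move=> y [r]; rewrite /= in_itv /= => /andP[r0 r1'] <-; exact: off_range.
  - apply: connected_continuous_connected.
      exact/connected_intervalP/interval_is_interval.
    by apply: continuous_subspaceW carc; apply: subset_itvScc; rewrite bnd_simp.
have cl0 : closure (phi i @` `]0, 1]) (phi i 0).
  apply: closure_image_continuous_within carc _ _ closure_itvoc01.
  - by rewrite /= in_itv /= lexx ler01.
  - by apply: subset_itvScc; rewrite bnd_simp.
split.
  apply: (closureS _ cl0) => y [r]; rewrite /= in_itv /= => /andP[r0 r1'] <-.
  by case: (branch_off_TR iN r0 r1').
(* phi i 0 is either the foot of the component of phi i 1, or lies in that component. *)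
case: (pselect (range h (phi i 0))) => [[t _ ht]|nr0].
  have rt : rpre h [set t] (phi i 1).
    right; split; first exact: off_range.
    by exists t; split => //; rewrite ht; exact: (closureS open_comp cl0).
  have [t' t'01 et] := rpre_uniq LG r1 rt.
  by rewrite -et in ht; left; exists t'.
have comp01 : Defs.comp h (phi i 0) (phi i 1).
  suff : phi i @` `[0, 1] `<=` Defs.comp h (phi i 0).
    by apply; exists 1 => //; rewrite /= in_itv /= ler01 lexx.
  apply: connected_component_max.
  - by exists 0 => //; rewrite /= in_itv /= lexx ler01.
  - move=> y [r]; rewrite /= in_itv /= => /andP[]; rewrite le_eqVlt.
    by case/orP=> [/eqP <- _ <- //|r0 r1' <-]; exact: off_range.
  - by apply: connected_continuous_connected => //; exact: segment_connected.
case: r1 => [[t [_ ht]]|[_ [t [t01 ct]]]]; first by case: (off_range 1 ltr01 (lexx 1)); exists t.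
by right; split => //; exists t; rewrite /Defs.comp (same_connected_component comp01).
Qed.

End Branches.

Lemma eq_cat_cases (X : Type) (x r x' r' : seq X) : x ++ r = x' ++ r' ->
  (exists t, x' = x ++ t /\ r = t ++ r') \/
  (exists e t, x = x' ++ e :: t /\ r' = e :: t ++ r).
Proof.
elim: x x' => [|e x IH] [|e' x'] /=.
- by move=> ->; left; exists [::].
- by move=> ->; left; exists (e' :: x').
- by move=> <-; right; exists e, x.
- case=> <- /IH [[t [-> ->]]|[e'' [t [-> ->]]]].
  + by left; exists t.
  + by right; exists e'', t.
Qed.

Section Similarity.
Variables (T : topologicalType) (h : RR -> T) (tau taui F : T -> T).
Variables (phi : nat -> RR -> T) (a b : nat -> nat -> RR).
Local Notation cyl := (Defs.cyl h tau taui F phi a b).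
Local Notation P := (Pset phi a b).
Local Notation sim := (Defs.sim h tau taui F phi a b).

Lemma sim_intro x y c s :
  cyl (rcons x c) = P c -> cyl (rcons y c) = P c -> sim (x ++ c :: s) (y ++ c :: s).
Proof.
have take_pivot z : take (size z).+1 (z ++ c :: s) = rcons z c.
  by rewrite take_cat ltnNge leqnSn subSnn /= take0 cats1.
have nth_pivot z : nth (0, 0)%N (z ++ c :: s) (size z) = c by rewrite nth_cat ltnn subnn.
have nth_suffix z i : (i <= size s)%N ->
    nth (0, 0)%N (z ++ c :: s) (size z + size s - i) = nth (0, 0)%N (c :: s) (size s - i).
  by move=> Hi; rewrite nth_cat ifN; [congr nth | ]; lia.
move=> cx cy; exists (size s).
rewrite !size_cat /= !addnS /= !addnK.
split; first lia.
- by move=> i Hi; rewrite !nth_suffix.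
- by rewrite take_pivot nth_pivot.
- by rewrite !nth_pivot.
- by rewrite take_pivot nth_pivot.
Qed.

Lemma sim_elim w v : w <> [::] -> v <> [::] -> sim w v ->
  exists x y c s, [/\ w = x ++ c :: s, v = y ++ c :: s,
    cyl (rcons x c) = P c & cyl (rcons y c) = P c].
Proof.
move=> wn vn [k [Hk Hn Hw Hwv Hv]].
set n := (size w).-1 in Hk Hn Hw Hwv Hv.
set m := (size v).-1 in Hk Hn Hw Hwv Hv.
have sw : size w = n.+1 by rewrite /n; case: (w) wn.
have sv : size v = m.+1 by rewrite /m; case: (v) vn.
have ec : nth (0, 0)%N v (m - k) = nth (0, 0)%N w (n - k) by rewrite Hn.
have ed : drop (m - k).+1 v = drop (n - k).+1 w.
  apply: (@eq_from_nth _ (0, 0)%N); first by rewrite !size_drop; lia.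
  move=> j; rewrite size_drop => Hj; rewrite !nth_drop.
  have -> : ((n - k).+1 + j = n - (k - j.+1))%N by lia.
  have -> : ((m - k).+1 + j = m - (k - j.+1))%N by lia.
  rewrite Hn //; lia.
exists (take (n - k) w), (take (m - k) v), (nth (0, 0)%N w (n - k)), (drop (n - k).+1 w).
split.
- by rewrite -drop_nth ?cat_take_drop //; lia.
- by rewrite -ed -ec -drop_nth ?cat_take_drop //; lia.
- by rewrite -take_nth //; lia.
- by rewrite -ec -take_nth -?Hv -?Hwv //; lia.
Qed.

End Similarity.

Section Cylinders.
Variables (T : topologicalType) (h : RR -> T) (tau taui F : T -> T).
Variables (N : nat) (phi : nat -> RR -> T) (Ni : nat -> nat) (a b : nat -> nat -> RR).
Variables (ell : nat -> nat -> nat) (p : nat -> nat -> int).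
Hypotheses (LG : lifted_graph h tau taui) (dF : degree_one tau F).
Hypotheses (SL : sun_like h F N phi) (BP : basic_partition h tau taui F N phi Ni a b ell p).
Local Notation sh := (Defs.shift tau taui).
Local Notation cyl := (Defs.cyl h tau taui F phi a b).
Local Notation P := (Pset phi a b).
Local Notation PZ := (Defs.PZ tau taui phi a b).
Local Notation sim := (Defs.sim h tau taui F phi a b).
Local Notation inP := (Defs.inP N Ni).

Lemma Pset_sub_X A : inP A -> P A `<=` Xset h F.
Proof.
have [[Hab _] _ _ _ _] := BP.
move=> /andP[iN jN] x [s]; rewrite /= in_itv /= => /andP[aS sb] <-.
have [a0 _ b1] := Hab _ _ iN jN.
by apply: (branch_in_X LG SL iN); [exact: le_trans aS | exact: le_trans b1].
Qed.

Lemma cyl1 A : inP A -> cyl [:: A] = P A.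
Proof.
move=> iA; apply/seteqP; split.
- move=> z [[x /(_ 0%N isT) [m _ [y Py /= ey]] <-] Xx] /=.
  have m0 : m = 0.
    by apply: (rpre_shift_eq0 LG (Pset_sub_X iA Py).2); rewrite ey; exact: Xx.2.
  by rewrite -ey m0; exact: Py.
- move=> y Py; split; last exact: Pset_sub_X iA _ Py.
  exists y => //= i; rewrite ltnS leqn0 => /eqP -> /=.
  by exists 0 => //; exists y.
Qed.

Definition cyl_next (S : set T) B : set T :=
  [set sh m (F y) | m in [set: int] & y in S `&` F @^-1` PZ B] `&` Xset h F.

Lemma cyl_rcons u L B : inP L -> cyl (rcons (rcons u L) B) = cyl_next (cyl (rcons u L)) B.
Proof.
have [_ [_ _ tauK tauiK] _ _ _] := LG.
have ish := iter_shift tauK tauiK dF.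
move=> iL; apply/seteqP; split.
- move=> z [[x Hx <-] Xz]; split => //.
  rewrite !size_rcons /= in Hx *.
  have := Hx (size u) (leqW (ltnSn _)).
  rewrite nth_rcons size_rcons ltnSn nth_rcons ltnn eqxx => -[m _ [y0 Py0 ey]].
  have ey0 : iter (size u) F (sh (- m) x) = y0 by rewrite ish -ey shiftNK.
  exists m => //; exists y0; last by rewrite -ey0 -iterS ish shiftKN.
  split; last first.
    rewrite /= -ey0 -iterS ish; apply: PZ_shift => //.
    by have := Hx (size u).+1 (ltnSn _); rewrite nth_rcons size_rcons ltnn eqxx.
  split; last exact: Pset_sub_X Py0.
  exists (sh (- m) x); last by rewrite size_rcons.
  move=> i; rewrite size_rcons => Hi; rewrite ish; apply: PZ_shift => //.
  by have := Hx i (leqW Hi); rewrite nth_rcons size_rcons Hi.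
- move=> z [[m _ [y [[[x Hx <-] _] /= PB] <-]] Xz]; split => //.
  exists (sh m x); last by rewrite !size_rcons ish.
  move=> i; rewrite size_rcons ltnS nth_rcons leq_eqVlt => /orP[/eqP ->|Hi].
  + by rewrite ltnn eqxx ish; apply: PZ_shift => //; rewrite size_rcons in PB *.
  + by rewrite Hi ish; apply: PZ_shift => //; exact: Hx.
Qed.

Lemma cyl_cat_congr u L v L' r : inP L -> inP L' -> all inP r ->
  cyl (rcons u L) = cyl (rcons v L') -> cyl (rcons u L ++ r) = cyl (rcons v L' ++ r).
Proof.
elim: r u L v L' => [|B r IH] u L v L' iL iL' /=; first by rewrite !cats0.
move=> /andP[iB ar] E; rewrite -!cat_rcons; apply: IH => //.
by rewrite !cyl_rcons // E.
Qed.

Lemma sim_refl w : word N Ni w -> sim w w.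
Proof.
case: w => [[]//|c s] [_ /andP[ic _]].
by apply: (sim_intro (x := [::]) (y := [::])); rewrite /= cyl1.
Qed.

Lemma sim_transfer x y c s v : all inP (x ++ c :: s) -> v <> [::] ->
  cyl (rcons x c) = P c -> cyl (rcons y c) = P c ->
  sim (x ++ c :: s) v -> sim (y ++ c :: s) v.
Proof.
rewrite all_cat /= => /and3P[ax ic as_] vn cx cy.
have rcons_pivot (z t : seq (nat * nat)) d e : rcons (z ++ d :: t) e = rcons z d ++ rcons t e.
  by rewrite rcons_cat rcons_cons cat_rcons.
have congr_pivot z z' d t e : inP d -> all inP (rcons t e) ->
    cyl (rcons z d) = cyl (rcons z' d) ->
    cyl (rcons (z ++ d :: t) e) = cyl (rcons (z' ++ d :: t) e).
  by move=> id it E; rewrite !rcons_pivot; exact: cyl_cat_congr.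
have xn : x ++ c :: s <> [::] by case: (x).
move=> /(sim_elim xn vn) [x' [y' [c' [s' [E -> cx' cy']]]]].
(* Re-pivot at whichever of c and c' comes later in x ++ c :: s. *)
case: (eq_cat_cases E) => [[[|e t] [ex' []]]|[e [t [ex [] ec es']]]].
- by move=> ec es; subst c' s'; exact: sim_intro.
- move=> ec es; subst e; rewrite es -cat_cons catA; apply: sim_intro => //.
  move: as_; rewrite es all_cat /= => /andP[allt /andP[ic' _]].
  by rewrite -cx' ex' (congr_pivot _ x) ?all_rcons ?ic' // cx cy.
- subst e; rewrite es' -cat_cons catA; apply: sim_intro => //.
  move: ax; rewrite ex all_cat /= => /andP[_ /andP[ie allt]].
  by rewrite -cx ex (congr_pivot _ y') ?all_rcons ?ic // cx' cy'.
Qed.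

End Cylinders.

Unset Implicit Arguments.
Theorem mainTheorem12 (T : topologicalType) (h : RR -> T) (tau taui F : T -> T)
    (N : nat) (phi : nat -> RR -> T) (Ni : nat -> nat) (a b : nat -> nat -> RR)
    (ell : nat -> nat -> nat) (p : nat -> nat -> int)
    (w : seq (nat * nat)) (be : set (seq (nat * nat))) :
  lifted_graph h tau taui ->
  continuous F ->
  degree_one tau F ->
  sun_like h F N phi ->
  basic_partition h tau taui F N phi Ni a b ell p ->
  vertex N Ni h tau taui F phi a b (cls N Ni h tau taui F phi a b w) ->
  word N Ni w ->
  arrow N Ni h tau taui F phi a b (cls N Ni h tau taui F phi a b w) be ->
  exists A, inP N Ni A /\ be = cls N Ni h tau taui F phi a b (rcons w A).
Proof.
move=> LG _ dF SL BP _ ww [_ _ [w' [B [[w'n aw'] iB ecls ->]]]].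
exists B; split => //.
have : cls N Ni h tau taui F phi a b w w by split => //; exact: (sim_refl LG SL BP).
rewrite ecls => -[_ /(sim_elim w'n ww.1) [x [y [c [s [ew' ew cx cy]]]]]].
have ewB' : rcons w' B = x ++ c :: rcons s B by rewrite ew' rcons_cat.
have ewB : rcons w B = y ++ c :: rcons s B by rewrite ew rcons_cat.
have ax : all (inP N Ni) (x ++ c :: rcons s B) by rewrite -ewB' all_rcons iB.
have ay : all (inP N Ni) (y ++ c :: rcons s B) by rewrite -ewB all_rcons iB ww.2.
rewrite ewB ewB'; apply/seteqP; split=> v [[vn av] sv]; split => //.
- exact: (sim_transfer LG dF SL BP ax vn cx cy).
- exact: (sim_transfer LG dF SL BP ay vn cy cx).
Qed.
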